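(* Let $N>1$ be an integer, $0<\epsilon<e$, and $\tfrac12<\beta<1$. Set \[ K=\left\lceil \log_{1/\beta}(N)\right\rceil\cdot\left\lceil \frac{\log(e/\epsilon)}{\log(\beta/(1-\beta))}\right\rceil . \] Then there exist functions $c_1,\dots,c_K:[0,N]\to\mathbb{R}$ and $r_1,\dots,r_K:[1,N]\to\mathbb{R}$ such that $h(x,y)=\sum_{i=1}^K c_i(x)r_i(y)$ satisfies \[ \left|\Lambda\!\left(\tfrac{x+y}{2}\right)-h(x,y)\right|\le\epsilon\qquad\text{for all }(x,y)\in[0,N]\times[1,N], \] where $\Lambda(z)=\Gamma(z+1/2)/\Gamma(z+1)$. In particular $K=\mathcal{O}(\log N\log(1/\epsilon))$ for fixed $\beta$.
   Context: $\Gamma$ denotes the gamma function; $e$ is Euler's number; $\log$ is the natural logarithm. A function of the form $\sum_{i=1}^K c_i(x)r_i(y)$ (with no continuity required) is said to have rank at most $K$. *)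

From Stdlib Require Import Reals Lra Lia ZArith List ClassicalEpsilon.
Open Scope R_scope.

(* Gauss's product formula for the Gamma function (valid for z > 0):
   Gamma z = lim_{n -> oo} n! n^z / (z (z+1) ... (z+n)). *)
Fixpoint rising_prod (z : R) (n : nat) : R :=
  match n with
  | O => z
  | S m => rising_prod z m * (z + INR (S m))
  end.

Definition gauss_seq (z : R) (n : nat) : R :=
  INR (fact n) * Rpower (INR n) z / rising_prod z n.

(* Gamma z := the limit of the Gauss sequence (chosen by classical epsilon;
   limits are unique, so this is the limit whenever it exists, i.e. z > 0). *)
Definition Gamma (z : R) : R :=
  epsilon (inhabits 0) (fun l => Un_cv (gauss_seq z) l).

Definition Lambda (z : R) : R := Gamma (z + / 2) / Gamma (z + 1).

Definition Rceil (x : R) : Z := (- Int_part (- x))%Z.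

Definition sum1K (K : nat) (f : nat -> R) : R :=
  fold_right Rplus 0 (map f (seq 1 K)).

(* Gauss's formula gives Lambda z = lim n^(-1/2) P_n(z) with
   P_n(z) = prod_(k <= n) (z + 1 + k) / (z + 1/2 + k), and P_n(z) = 1 + sum_k w_k / (z + 1/2 + k)
   with w_k >= 0 by partial fractions.  Cover [1, N] by the K1 pieces [A^J, A^(J+1)],
   A = 1/beta, and on each piece interpolate y |-> Lambda ((x + y) / 2) at K2 equispaced nodes in
   Newton form: the coefficients depend on x only, the basis polynomials on y only, and for y in
   piece J only the K2 terms of piece J are kept, so the rank is K1 K2.  For a Cauchy kernel
   1 / (p + y) the interpolation error is 1 / (p + y) * prod_t (t - y) / (p + t), and every factor
   is at most q = (1 - beta) / beta, since the piece has length q A^J <= q t.  Hence the error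
   for n^(-1/2) P_n is at most q^K2 n^(-1/2) P_n(1/2) <= q^K2 e (as P_n(1/2)^2 <= 2n + 3),
   which is <= eps by the choice of K2; the bound passes to the limit n -> oo. *)

From Stdlib Require Import Reals ZArith List.
From Stdlib Require Import Lra Lia ClassicalEpsilon.
Open Scope R_scope.

Lemma Un_cv_const (c : R) : Un_cv (fun _ => c) c.
Proof. intros e he. exists O. intros n _. unfold Rdist. rewrite Rminus_diag, Rabs_R0. lra. Qed.

Lemma Un_cv_inv (u : nat -> R) (l : R) : Un_cv u l -> l <> 0 -> Un_cv (fun n => / u n) (/ l).
Proof.
  intros Hu Hl e he.
  assert (Hal : 0 < Rabs l) by (apply Rabs_pos_lt; auto).
  destruct (Hu (Rabs l / 2)) as [N1 HN1]; [lra|].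
  destruct (Hu (e * (Rabs l * Rabs l) / 2)) as [N2 HN2].
  { apply Rmult_lt_0_compat; [apply Rmult_lt_0_compat; nra|lra]. }
  exists (max N1 N2). intros n hn.
  specialize (HN1 n ltac:(lia)). specialize (HN2 n ltac:(lia)).
  unfold Rdist in *.
  assert (Hun : Rabs l / 2 < Rabs (u n)).
  { pose proof (Rabs_triang_inv l (u n)). rewrite <- Rabs_Ropp in HN1.
    replace (- (u n - l)) with (l - u n) in HN1 by ring. lra. }
  assert (Hu0 : u n <> 0). { intro h. rewrite h, Rabs_R0 in Hun. lra. }
  replace (/ u n - / l) with ((l - u n) / (u n * l)) by (field; auto).
  unfold Rdiv. rewrite Rabs_mult, Rabs_inv, Rabs_mult.
  rewrite <- Rabs_Ropp. replace (- (l - u n)) with (u n - l) by ring.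
  apply Rmult_lt_reg_r with (Rabs (u n) * Rabs l). nra.
  rewrite Rmult_assoc, Rinv_l by nra. rewrite Rmult_1_r.
  apply Rlt_le_trans with (e * (Rabs l * Rabs l) / 2); [lra|].
  assert (0 < e * Rabs l) by nra. nra.
Qed.

Lemma Un_cv_Rabs_le (u : nat -> R) (l e : R) (N0 : nat) :
  Un_cv u l -> (forall n, (N0 <= n)%nat -> Rabs (u n) <= e) -> Rabs l <= e.
Proof.
  intros Hu Hb.
  apply (Rle_cv_lim (Un := fun n => Rabs (u (n + N0)%nat)) (Vn := fun _ => e)).
  - intros n. apply Hb. lia.
  - apply cv_cvabs, CV_shift', Hu.
  - apply Un_cv_const.
Qed.

Lemma exp_le_mono (x y : R) : x <= y -> exp x <= exp y.
Proof. intros [h|<-]; [left; apply exp_increasing; exact h | lra]. Qed.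

Lemma Rdiv_le_0_compat (a b : R) : 0 <= a -> 0 < b -> 0 <= a / b.
Proof. intros ha hb. unfold Rdiv. apply Rmult_le_pos; [exact ha | left; apply Rinv_0_lt_compat, hb]. Qed.

Lemma ln_le_sub_1 (x : R) : 0 < x -> ln x <= x - 1.
Proof. intros hx. pose proof (exp_ineq1_le (ln x)) as H. rewrite exp_ln in H; lra. Qed.

Lemma ln_div (a b : R) : 0 < a -> 0 < b -> ln (a / b) = ln a - ln b.
Proof. intros ha hb. unfold Rdiv. rewrite ln_mult, ln_Rinv; try lra. apply Rinv_0_lt_compat; lra. Qed.

Lemma ln_succ_bounds (n : nat) : (1 <= n)%nat ->
  / INR (S n) <= ln (INR (S n)) - ln (INR n) <= / INR n.
Proof.
  intros hn. assert (h1 : 1 <= INR n) by (apply (le_INR 1); auto).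
  rewrite S_INR. split.
  - assert (H := ln_le_sub_1 (INR n / (INR n + 1)) ltac:(apply Rdiv_lt_0_compat; lra)).
    rewrite ln_div in H by lra.
    replace (INR n / (INR n + 1) - 1) with (- / (INR n + 1)) in H by (field; lra). lra.
  - rewrite <- ln_div by lra.
    assert (H := ln_le_sub_1 ((INR n + 1) / INR n) ltac:(apply Rdiv_lt_0_compat; lra)).
    replace ((INR n + 1) / INR n - 1) with (/ INR n) in H by (field; lra). lra.
Qed.

Lemma rising_prod_pos (a : R) (n : nat) : 0 < a -> 0 < rising_prod a n.
Proof.
  intros ha. induction n; cbn [rising_prod]; auto.
  apply Rmult_lt_0_compat; auto. pose proof (pos_INR (S n)). lra.
Qed.

Lemma gauss_seq_pos (a : R) (n : nat) : 0 < a -> 0 < gauss_seq a n.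
Proof.
  intros ha. unfold gauss_seq, Rpower. apply Rdiv_lt_0_compat.
  - apply Rmult_lt_0_compat; [apply lt_0_INR, lt_O_fact | apply exp_pos].
  - apply rising_prod_pos, ha.
Qed.

Lemma gauss_seq_succ (a : R) (n : nat) : 0 < a -> (1 <= n)%nat ->
  gauss_seq a (S n) = gauss_seq a n *
    (INR (S n) * exp (a * (ln (INR (S n)) - ln (INR n))) / (a + INR (S n))).
Proof.
  intros ha hn. unfold gauss_seq, Rpower.
  change (fact (S n)) with (S n * fact n)%nat. rewrite mult_INR.
  change (rising_prod a (S n)) with (rising_prod a n * (a + INR (S n))).
  replace (a * ln (INR (S n))) with (a * ln (INR n) + a * (ln (INR (S n)) - ln (INR n))) by ring.
  rewrite exp_plus.
  pose proof (rising_prod_pos a n ha). pose proof (pos_INR (S n)).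
  field. split; lra.
Qed.

Lemma gauss_seq_le_succ (a : R) (n : nat) : 0 < a -> (1 <= n)%nat ->
  gauss_seq a n <= gauss_seq a (S n).
Proof.
  intros ha hn. rewrite gauss_seq_succ by auto.
  pose proof (gauss_seq_pos a n ha). pose proof (ln_succ_bounds n hn) as [hl _].
  set (d := ln (INR (S n)) - ln (INR n)) in *.
  assert (hS : 0 < INR (S n)) by (apply lt_0_INR; lia).
  assert (He : 1 + a * / INR (S n) <= exp (a * d)).
  { apply Rle_trans with (1 + a * d); [|apply exp_ineq1_le].
    apply Rplus_le_compat_l, Rmult_le_compat_l; lra. }
  assert (X : 1 <= INR (S n) * exp (a * d) / (a + INR (S n))).
  { apply Rmult_le_reg_r with (a + INR (S n)); [lra|].
    unfold Rdiv. rewrite Rmult_assoc, Rinv_l, Rmult_1_r by lra.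
    replace (1 * (a + INR (S n))) with (INR (S n) * (1 + a * / INR (S n))) by (field; lra).
    apply Rmult_le_compat_l; lra. }
  nra.
Qed.

(* The bound comes from [ln (n+1) - ln n <= 1/n] and [1 - a/(a+n+1) <= exp (- a/(a+n+1))]. *)
Lemma gauss_seq_exp_le_pred (a : R) (n : nat) : 0 < a -> (1 <= n)%nat ->
  gauss_seq a (S n) * exp (a * (1 + a) / INR (S n)) <=
  gauss_seq a n * exp (a * (1 + a) / INR n).
Proof.
  intros ha hn. rewrite gauss_seq_succ by auto.
  pose proof (gauss_seq_pos a n ha). pose proof (ln_succ_bounds n hn) as [_ hu].
  assert (h1 : 1 <= INR n) by (apply (le_INR 1); auto).
  rewrite S_INR in *.
  set (d := ln (INR n + 1) - ln (INR n)) in *. set (m := INR n) in *.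
  assert (E1 : exp (a * d) <= exp (a / m)).
  { apply exp_le_mono. unfold Rdiv. apply Rmult_le_compat_l; lra. }
  assert (E2 : (m + 1) / (a + (m + 1)) <= exp (- (a / (a + (m + 1))))).
  { pose proof (exp_ineq1_le (- (a / (a + (m + 1))))).
    replace ((m + 1) / (a + (m + 1))) with (1 + - (a / (a + (m + 1)))) by (field; lra). lra. }
  assert (E3 : a / m - a / (a + (m + 1)) <= a * (1 + a) / m - a * (1 + a) / (m + 1)).
  { replace (a / m - a / (a + (m + 1))) with (a * (1 + a) / (m * (a + (m + 1)))) by (field; lra).
    replace (a * (1 + a) / m - a * (1 + a) / (m + 1)) with (a * (1 + a) / (m * (m + 1))) by (field; lra).
    unfold Rdiv. apply Rmult_le_compat_l; [nra|].
    apply Rinv_le_contravar; nra. }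
  assert (X : (m + 1) * exp (a * d) / (a + (m + 1)) <=
              exp (a * (1 + a) / m - a * (1 + a) / (m + 1))).
  { replace ((m + 1) * exp (a * d) / (a + (m + 1)))
      with (exp (a * d) * ((m + 1) / (a + (m + 1)))) by (field; lra).
    apply Rle_trans with (exp (a / m) * exp (- (a / (a + (m + 1))))).
    - pose proof (exp_pos (a * d)).
      apply Rmult_le_compat; try lra. apply Rdiv_le_0_compat; lra.
    - rewrite <- exp_plus. apply exp_le_mono. lra. }
  replace (exp (a * (1 + a) / m))
    with (exp (a * (1 + a) / m - a * (1 + a) / (m + 1)) * exp (a * (1 + a) / (m + 1)))
    by (rewrite <- exp_plus; f_equal; ring).
  pose proof (exp_pos (a * (1 + a) / (m + 1))).
  rewrite !Rmult_assoc. apply Rmult_le_compat_l; [lra|].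
  apply Rmult_le_compat_r; lra.
Qed.

Lemma gauss_seq_bounded (a : R) (n : nat) : 0 < a -> (1 <= n)%nat ->
  gauss_seq a n <= gauss_seq a 1 * exp (a * (1 + a)).
Proof.
  intros ha hn.
  assert (H : forall k, gauss_seq a (S k) * exp (a * (1 + a) / INR (S k)) <=
                        gauss_seq a 1 * exp (a * (1 + a))).
  { induction k as [|k IH].
    - simpl INR. rewrite Rdiv_1_r. lra.
    - eapply Rle_trans; [apply gauss_seq_exp_le_pred; auto; lia | exact IH]. }
  destruct n as [|n]; [lia|]. specialize (H n).
  assert (1 <= exp (a * (1 + a) / INR (S n))).
  { assert (0 <= a * (1 + a) / INR (S n)) by (apply Rdiv_le_0_compat; [nra | apply lt_0_INR; lia]).
    pose proof (exp_ineq1_le (a * (1 + a) / INR (S n))). lra. }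
  pose proof (gauss_seq_pos a (S n) ha). nra.
Qed.

Lemma gauss_seq_cv (a : R) : 0 < a -> exists l, 0 < l /\ Un_cv (gauss_seq a) l.
Proof.
  intros ha.
  set (u := fun k => gauss_seq a (S k)).
  assert (Hg : Un_growing u) by (intro k; apply gauss_seq_le_succ; auto; lia).
  assert (Hb : has_ub u).
  { exists (gauss_seq a 1 * exp (a * (1 + a))). intros x [i ->].
    apply gauss_seq_bounded; auto; lia. }
  destruct (growing_cv u Hg Hb) as [l Hl].
  exists l. split.
  - pose proof (growing_ineq u l Hg Hl 0). pose proof (gauss_seq_pos a 1 ha). unfold u in *. lra.
  - apply CV_shift with 1%nat. intros e he. destruct (Hl e he) as [N HN]. exists N.
    intros n hn. rewrite Nat.add_1_r. apply HN, hn.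
Qed.

Lemma Gamma_pos_cv (a : R) : 0 < a -> 0 < Gamma a /\ Un_cv (gauss_seq a) (Gamma a).
Proof.
  intros ha. destruct (gauss_seq_cv a ha) as [l [hl Hl]].
  assert (H : Un_cv (gauss_seq a) (Gamma a)).
  { unfold Gamma. apply epsilon_spec. exists l; exact Hl. }
  rewrite (UL_sequence _ _ _ H Hl). auto.
Qed.

Fixpoint rising_ratio (n : nat) (z : R) : R :=
  match n with
  | O => (z + 1) / (z + / 2)
  | S m => rising_ratio m z * ((z + 1 + INR (S m)) / (z + / 2 + INR (S m)))
  end.

Lemma rising_prod_ratio (z : R) (n : nat) : 0 < z + / 2 ->
  rising_prod (z + 1) n / rising_prod (z + / 2) n = rising_ratio n z.
Proof.
  intros hz. induction n as [|n IH]; [reflexivity|].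
  cbn [rising_prod rising_ratio]. rewrite <- IH.
  pose proof (rising_prod_pos _ n hz). pose proof (pos_INR (S n)).
  field. split; lra.
Qed.

Lemma rising_ratio_pos (n : nat) (z : R) :
  (forall k, (k <= n)%nat -> 0 < (z + 1 + INR k) / (z + / 2 + INR k)) -> 0 < rising_ratio n z.
Proof.
  induction n as [|n IH]; intros H.
  - specialize (H 0%nat (le_n _)). simpl INR in H. rewrite !Rplus_0_r in H. exact H.
  - cbn [rising_ratio]. apply Rmult_lt_0_compat.
    + apply IH. intros k hk. apply H. lia.
    + apply H. lia.
Qed.

Definition cauchy_sum (L : list (R * R)) (z : R) : R :=
  fold_right (fun p acc => fst p / (z + snd p) + acc) 0 L.

Lemma cauchy_sum_app (L1 L2 : list (R * R)) (z : R) :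
  cauchy_sum (L1 ++ L2) z = cauchy_sum L1 z + cauchy_sum L2 z.
Proof. induction L1 as [|p L1 IH]; simpl; [ring|]. unfold cauchy_sum in *. simpl. rewrite IH. ring. Qed.

Lemma cauchy_sum_mul_factor (L : list (R * R)) (z a b : R) :
  z + a <> 0 ->
  (forall p, In p L -> z + snd p <> 0 /\ a - snd p <> 0) ->
  cauchy_sum (map (fun p => (fst p * (b - snd p) / (a - snd p), snd p)) L) z =
  cauchy_sum L z * (1 + (b - a) / (z + a)) - (b - a) / (z + a) * cauchy_sum L (- a).
Proof.
  intros hza H. induction L as [|p L IH]; simpl.
  - unfold cauchy_sum; simpl; ring.
  - unfold cauchy_sum in *. simpl. rewrite IH by (intros; apply H; simpl; auto).
    destruct (H p (or_introl eq_refl)) as [h1 h2].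
    assert (- a + snd p <> 0) by lra.
    field. repeat split; auto.
Qed.

Lemma rising_ratio_partial_fractions (n : nat) : exists L : list (R * R),
  (forall p, In p L -> 0 <= fst p /\ exists k, (k <= n)%nat /\ snd p = / 2 + INR k) /\
  (forall z, (forall k, (k <= n)%nat -> z + / 2 + INR k <> 0) ->
     rising_ratio n z = 1 + cauchy_sum L z).
Proof.
  induction n as [|n [L [HL HR]]].
  - exists ((/ 2, / 2) :: nil). split.
    + intros p [<-|[]]. simpl. split; [lra|]. exists 0%nat. split; auto. simpl; ring.
    + intros z H. specialize (H 0%nat (le_n _)). simpl INR in H. rewrite Rplus_0_r in H.
      unfold cauchy_sum; simpl. field. lra.
  - set (a := / 2 + INR (S n)). set (b := 1 + INR (S n)).
    assert (hSn : INR (S n) = INR n + 1) by apply S_INR.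
    (* the residue at the new pole [-a] is [(b - a) * rising_ratio n (- a)] *)
    exists (map (fun p => (fst p * (b - snd p) / (a - snd p), snd p)) L
              ++ ((b - a) * rising_ratio n (- a), a) :: nil).
    split.
    + intros p Hp. apply in_app_or in Hp. destruct Hp as [Hp|[<-|[]]].
      * apply in_map_iff in Hp. destruct Hp as [p' [<- Hp']].
        destruct (HL p' Hp') as [h0 [k [hk hs]]]. simpl. split.
        -- assert (INR k <= INR n) by (apply le_INR; auto).
           apply Rdiv_le_0_compat.
           ++ apply Rmult_le_pos; auto. unfold b. rewrite hs. lra.
           ++ unfold a. rewrite hs. lra.
        -- exists k; split; auto.
      * simpl. split.
        -- apply Rmult_le_pos; [unfold a, b; lra|]. left. apply rising_ratio_pos.
           intros k hk. assert (INR k <= INR n) by (apply le_INR; auto).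
           unfold a. rewrite hSn.
           replace ((- (/ 2 + (INR n + 1)) + 1 + INR k) / (- (/ 2 + (INR n + 1)) + / 2 + INR k))
             with ((INR n + / 2 - INR k) / (INR n + 1 - INR k)) by (field; lra).
           apply Rdiv_lt_0_compat; lra.
        -- exists (S n). split; auto.
    + intros z Hz.
      assert (hza : z + a <> 0) by (unfold a; rewrite <- Rplus_assoc; apply Hz; auto).
      cbn [rising_ratio]. rewrite HR by (intros; apply Hz; lia).
      replace ((z + 1 + INR (S n)) / (z + / 2 + INR (S n))) with (1 + (b - a) / (z + a))
        by (unfold a, b in *; rewrite <- Rplus_assoc in hza; field; lra).
      rewrite cauchy_sum_app, cauchy_sum_mul_factor; auto.
      * replace (cauchy_sum (((b - a) * rising_ratio n (- a), a) :: nil) z)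
          with ((b - a) * rising_ratio n (- a) / (z + a)) by (unfold cauchy_sum; simpl; ring).
        rewrite (HR (- a)); [field; auto|].
        intros k hk. assert (INR k <= INR n) by (apply le_INR; auto). unfold a. rewrite hSn. lra.
      * intros p Hp. destruct (HL p Hp) as [_ [k [hk ->]]]. split.
        -- rewrite <- Rplus_assoc. apply Hz. lia.
        -- assert (INR k <= INR n) by (apply le_INR; auto). unfold a. rewrite hSn. lra.
Qed.

Lemma rising_ratio_half_sq_le (n : nat) : rising_ratio n (/ 2) * rising_ratio n (/ 2) <= 2 * INR n + 3.
Proof.
  induction n as [|n IH]; [simpl; lra|].
  cbn [rising_ratio]. rewrite S_INR.
  set (r := rising_ratio n (/ 2)) in *. set (m := INR n).
  assert (0 <= m) by apply pos_INR.
  replace ((/ 2 + 1 + (m + 1)) / (/ 2 + / 2 + (m + 1))) with ((2 * m + 5) / (2 * m + 4)) by (field; lra).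
  set (X := (2 * m + 5) / (2 * m + 4)).
  assert (HX : X * X * (2 * m + 3) <= 2 * (m + 1) + 3).
  { unfold X. replace ((2 * m + 5) / (2 * m + 4) * ((2 * m + 5) / (2 * m + 4)) * (2 * m + 3))
      with ((2 * m + 5) * ((2 * m + 5) * (2 * m + 3)) / ((2 * m + 4) * (2 * m + 4))) by (field; lra).
    apply Rmult_le_reg_r with ((2 * m + 4) * (2 * m + 4)); [nra|].
    unfold Rdiv. rewrite Rmult_assoc, Rinv_l by nra. nra. }
  assert (0 <= X * X) by nra.
  replace (r * X * (r * X)) with ((r * r) * (X * X)) by ring.
  apply Rle_trans with ((2 * m + 3) * (X * X)); [apply Rmult_le_compat_r; auto | lra].
Qed.

Lemma exp_half_ln_sq (n : nat) : (1 <= n)%nat ->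
  exp (- / 2 * ln (INR n)) * exp (- / 2 * ln (INR n)) = / INR n.
Proof.
  intros hn. rewrite <- exp_plus.
  replace (- / 2 * ln (INR n) + - / 2 * ln (INR n)) with (- ln (INR n)) by field.
  rewrite exp_Ropp, exp_ln; auto. apply lt_0_INR; lia.
Qed.

Lemma rising_ratio_half_le (n : nat) : (2 <= n)%nat ->
  exp (- / 2 * ln (INR n)) * rising_ratio n (/ 2) <= exp 1.
Proof.
  intros hn. pose proof (exp_half_ln_sq n ltac:(lia)) as Hr. pose proof (rising_ratio_half_sq_le n).
  set (r := exp (- / 2 * ln (INR n))) in *. set (t := rising_ratio n (/ 2)) in *.
  assert (h2 : 2 <= INR n) by (apply (le_INR 2); auto).
  assert (0 < r) by apply exp_pos.
  assert (0 < t).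
  { apply rising_ratio_pos. intros k _. pose proof (pos_INR k). apply Rdiv_lt_0_compat; lra. }
  assert (He : 2 < exp 1) by (pose proof (exp_ineq1 1 ltac:(lra)); lra).
  assert (Hsq : (r * t) * (r * t) <= 4).
  { replace ((r * t) * (r * t)) with ((r * r) * (t * t)) by ring. rewrite Hr.
    apply Rmult_le_reg_l with (INR n); [lra|].
    rewrite <- Rmult_assoc, Rinv_r, Rmult_1_l by lra. nra. }
  nra.
Qed.

Definition gauss_ratio (n : nat) (z : R) : R := gauss_seq (z + / 2) n / gauss_seq (z + 1) n.

Lemma Lambda_gauss_cv (z : R) : 0 < z + / 2 -> Un_cv (fun n => gauss_ratio n z) (Lambda z).
Proof.
  intros hz.
  destruct (Gamma_pos_cv (z + / 2) hz) as [_ H1].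
  destruct (Gamma_pos_cv (z + 1) ltac:(lra)) as [h2 H2].
  unfold gauss_ratio, Lambda, Rdiv. apply CV_mult; [exact H1|]. apply Un_cv_inv; [exact H2 | lra].
Qed.

Lemma gauss_ratio_rising (z : R) (n : nat) : 0 < z + / 2 -> (1 <= n)%nat ->
  gauss_ratio n z = exp (- / 2 * ln (INR n)) * rising_ratio n z.
Proof.
  intros hz hn. rewrite <- rising_prod_ratio by auto.
  unfold gauss_ratio, gauss_seq, Rpower.
  replace ((z + / 2) * ln (INR n)) with (- / 2 * ln (INR n) + (z + 1) * ln (INR n)) by field.
  rewrite exp_plus.
  pose proof (rising_prod_pos _ n hz). pose proof (rising_prod_pos (z + 1) n ltac:(lra)).
  pose proof (exp_pos ((z + 1) * ln (INR n))). pose proof (exp_pos (- / 2 * ln (INR n))).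
  assert (0 < INR (fact n)) by (apply lt_0_INR, lt_O_fact).
  field. repeat split; lra.
Qed.

Definition rsum (m : nat) (F : nat -> R) : R := fold_right Rplus 0 (map F (seq 0 m)).

Lemma rsum_S (m : nat) (F : nat -> R) : rsum (S m) F = F 0%nat + rsum m (fun k => F (S k)).
Proof. unfold rsum. simpl. f_equal. rewrite <- seq_shift, map_map. reflexivity. Qed.

Lemma rsum_ext (m : nat) (F G : nat -> R) :
  (forall k, (k < m)%nat -> F k = G k) -> rsum m F = rsum m G.
Proof.
  revert F G. induction m as [|m IH]; intros F G H; [reflexivity|].
  rewrite !rsum_S, H by lia. f_equal. apply IH. intros; apply H; lia.
Qed.

Lemma rsum_scal (m : nat) (F : nat -> R) (c : R) : rsum m (fun k => c * F k) = c * rsum m F.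
Proof.
  revert F. induction m as [|m IH]; intros F; [unfold rsum; simpl; ring|].
  rewrite !rsum_S, IH. ring.
Qed.

Lemma rsum_zero (m : nat) : rsum m (fun _ => 0) = 0.
Proof. induction m as [|m IH]; [reflexivity|]. rewrite rsum_S, IH. ring. Qed.

Lemma rsum_add (m1 m2 : nat) (F : nat -> R) :
  rsum (m1 + m2) F = rsum m1 F + rsum m2 (fun k => F (m1 + k)%nat).
Proof.
  revert F. induction m1 as [|m1 IH]; intros F.
  - unfold rsum at 2. simpl. rewrite Rplus_0_l. reflexivity.
  - simpl plus. rewrite !rsum_S, IH. simpl. ring.
Qed.

Lemma rsum_blocks (m1 m2 : nat) (F : nat -> R) :
  rsum (m1 * m2) F = rsum m1 (fun J => rsum m2 (fun k => F (J * m2 + k)%nat)).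
Proof.
  revert F. induction m1 as [|m1 IH]; intros F; [reflexivity|].
  change (S m1 * m2)%nat with (m2 + m1 * m2)%nat. rewrite rsum_add, IH, rsum_S.
  f_equal. apply rsum_ext; intros; apply rsum_ext; intros; f_equal; lia.
Qed.

Lemma rsum_delta (m j : nat) (F : nat -> R) :
  (j < m)%nat -> (forall J, J <> j -> F J = 0) -> rsum m F = F j.
Proof.
  revert F j. induction m as [|m IH]; intros F j hj H; [lia|].
  rewrite rsum_S. destruct j as [|j].
  - rewrite (rsum_ext m _ (fun _ => 0)), rsum_zero; [ring|]. intros k _. apply H. lia.
  - rewrite (IH _ j); [rewrite H; [ring | lia] | lia |]. intros J hJ. apply H. lia.
Qed.

Lemma sum1K_rsum (K : nat) (f : nat -> R) : sum1K K f = rsum K (fun k => f (S k)).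
Proof. unfold sum1K, rsum. rewrite <- seq_shift, map_map. reflexivity. Qed.

(* Index [i] in [1 .. m1 * m2] encodes block [(i-1)/m2] and position [(i-1) mod m2]. *)
Lemma sum1K_block_select (m1 m2 J : nat) (a b : nat -> nat -> R) : (J < m1)%nat ->
  sum1K (m1 * m2) (fun i => a ((i - 1) / m2)%nat ((i - 1) mod m2)%nat *
    (if Nat.eqb J ((i - 1) / m2) then b ((i - 1) / m2)%nat ((i - 1) mod m2)%nat else 0))
  = rsum m2 (fun k => a J k * b J k).
Proof.
  intros hJ.
  assert (Hdm : forall J' k, (k < m2)%nat ->
            ((S (J' * m2 + k) - 1) / m2 = J')%nat /\ ((S (J' * m2 + k) - 1) mod m2 = k)%nat).
  { intros J' k hk. split.
    - symmetry. apply (Nat.div_unique _ _ _ k); [exact hk | lia].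
    - symmetry. apply (Nat.mod_unique _ _ J' k); [exact hk | lia]. }
  rewrite sum1K_rsum, rsum_blocks, (rsum_delta m1 J); [| exact hJ |].
  - apply rsum_ext. intros k hk. destruct (Hdm J k hk) as [-> ->]. rewrite Nat.eqb_refl. reflexivity.
  - intros J' hJ'. rewrite (rsum_ext m2 _ (fun _ => 0)), rsum_zero; [reflexivity|].
    intros k hk. destruct (Hdm J' k hk) as [-> ->].
    replace (J =? J')%nat with false by (symmetry; apply Nat.eqb_neq; auto). ring.
Qed.

Definition divdiff (t : R) (f : R -> R) : R -> R := fun u => (f u - f t) / (u - t).

Fixpoint newton (l : list R) (f : R -> R) (y : R) : R :=
  match l with
  | nil => 0
  | t :: l' => f t + (y - t) * newton l' (divdiff t f) y
  end.

Fixpoint newton_coef (l : list R) (f : R -> R) (k : nat) : R :=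
  match l with
  | nil => 0
  | t :: l' => match k with O => f t | S k' => newton_coef l' (divdiff t f) k' end
  end.

Fixpoint newton_basis (l : list R) (k : nat) (y : R) : R :=
  match l with
  | nil => 0
  | t :: l' => match k with O => 1 | S k' => (y - t) * newton_basis l' k' y end
  end.

Lemma newton_sum (l : list R) (f : R -> R) (y : R) :
  newton l f y = rsum (length l) (fun k => newton_coef l f k * newton_basis l k y).
Proof.
  revert f. induction l as [|t l IH]; intros f; [reflexivity|].
  simpl length. rewrite rsum_S. simpl. rewrite IH, <- rsum_scal. f_equal; [ring|].
  apply rsum_ext. intros; simpl; ring.
Qed.

Lemma newton_ext (l : list R) (f g : R -> R) (y : R) :
  (forall u, In u l -> f u = g u) -> newton l f y = newton l g y.
Proof.
  revert f g. induction l as [|t l IH]; intros f g H; [reflexivity|].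
  simpl. rewrite H by (simpl; auto). f_equal. f_equal. apply IH.
  intros u hu. unfold divdiff. rewrite !H by (simpl; auto). reflexivity.
Qed.

Lemma newton_add (l : list R) (f g : R -> R) (y : R) :
  newton l (fun u => f u + g u) y = newton l f y + newton l g y.
Proof.
  revert f g. induction l as [|t l IH]; intros f g; [simpl; ring|].
  simpl. rewrite (newton_ext l (divdiff t (fun u => f u + g u)) (fun u => divdiff t f u + divdiff t g u)).
  - rewrite IH. ring.
  - intros u _. unfold divdiff, Rdiv. ring.
Qed.

Lemma newton_scal (l : list R) (f : R -> R) (c y : R) :
  newton l (fun u => c * f u) y = c * newton l f y.
Proof.
  revert f. induction l as [|t l IH]; intros f; [simpl; ring|].
  simpl. rewrite (newton_ext l (divdiff t (fun u => c * f u)) (fun u => c * divdiff t f u)).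
  - rewrite IH. ring.
  - intros u _. unfold divdiff, Rdiv. ring.
Qed.

Lemma newton_zero (l : list R) (y : R) : newton l (fun _ => 0) y = 0.
Proof.
  rewrite (newton_ext l (fun _ => 0) (fun _ => 0 * 0)) by (intros; ring).
  rewrite newton_scal. ring.
Qed.

Lemma newton_const (l : list R) (c y : R) : l <> nil -> newton l (fun _ => c) y = c.
Proof.
  destruct l as [|t l]; [intros []; reflexivity|]. intros _. simpl.
  rewrite (newton_ext l (divdiff t (fun _ => c)) (fun _ => 0)), newton_zero; [ring|].
  intros; unfold divdiff, Rdiv; ring.
Qed.

Lemma newton_cv (l : list R) (y : R) (F : nat -> R -> R) (G : R -> R) :
  (forall u, In u l -> Un_cv (fun n => F n u) (G u)) ->
  Un_cv (fun n => newton l (F n) y) (newton l G y).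
Proof.
  revert F G. induction l as [|t l IH]; intros F G H; simpl.
  - apply Un_cv_const.
  - apply CV_plus; [apply H; simpl; auto|].
    apply CV_mult; [apply Un_cv_const|].
    apply IH. intros u hu. unfold divdiff, Rdiv. apply CV_mult; [|apply Un_cv_const].
    apply CV_minus; apply H; simpl; auto.
Qed.

Definition node_ratio_prod (l : list R) (p y : R) : R :=
  fold_right Rmult 1 (map (fun t => (t - y) / (p + t)) l).

(* The divided difference of [u |-> 1/(p+u)] at [t] is [-1/(p+t)] times the same kernel,
   which makes the interpolation error an explicit product. *)
Lemma newton_cauchy_kernel_error (l : list R) (p y : R) :
  NoDup l -> (forall t, In t l -> 0 < p + t) -> 0 < p + y ->
  / (p + y) - newton l (fun u => / (p + u)) y = / (p + y) * node_ratio_prod l p y.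
Proof.
  revert y. induction l as [|t l IH]; intros y hnd hpos hy.
  - unfold node_ratio_prod; simpl. ring.
  - inversion hnd as [|t' l' hnin hnd']. subst.
    assert (ht : 0 < p + t) by (apply hpos; simpl; auto).
    simpl. rewrite (newton_ext l (divdiff t (fun u => / (p + u))) (fun u => (- / (p + t)) * / (p + u))).
    + rewrite newton_scal.
      assert (E : newton l (fun u => / (p + u)) y = / (p + y) - / (p + y) * node_ratio_prod l p y).
      { rewrite <- IH; auto. ring. intros; apply hpos; simpl; auto. }
      rewrite E. unfold node_ratio_prod. simpl. fold (node_ratio_prod l p y).
      field. split; lra.
    + intros u hu. unfold divdiff.
      assert (0 < p + u) by (apply hpos; simpl; auto).
      assert (u - t <> 0) by (intro h; apply hnin; replace t with u by lra; exact hu).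
      field. repeat split; lra.
Qed.

Lemma node_ratio_prod_bound (l : list R) (p y q : R) :
  (forall t, In t l -> Rabs ((t - y) / (p + t)) <= q) ->
  Rabs (node_ratio_prod l p y) <= q ^ length l.
Proof.
  induction l as [|t l IH]; intros H.
  - unfold node_ratio_prod. simpl. rewrite Rabs_R1. lra.
  - unfold node_ratio_prod. simpl. fold (node_ratio_prod l p y). rewrite Rabs_mult.
    apply Rmult_le_compat; try apply Rabs_pos.
    + apply H. simpl; auto.
    + apply IH. intros; apply H; simpl; auto.
Qed.

Section NodeHypotheses.

Variables (x y q : R) (l : list R).
Hypotheses (hx : 0 <= x) (hy : 1 <= y) (hq : 0 <= q) (hnd : NoDup l)
  (hl : forall t, In t l -> 1 <= t) (hty : forall t, In t l -> Rabs (t - y) <= q * t)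
  (hne : l <> nil).

Lemma newton_cauchy_term_error (w s : R) : 0 <= w -> / 2 <= s ->
  Rabs (w / ((x + y) / 2 + s) - newton l (fun u => w / ((x + u) / 2 + s)) y)
  <= q ^ length l * (w / (/ 2 + s)).
Proof.
  intros hw hs. set (p := x + 2 * s).
  rewrite (newton_ext l _ (fun u => (2 * w) * / (p + u))), newton_scal.
  2:{ intros u hu. specialize (hl u hu). unfold p. field. lra. }
  replace (w / ((x + y) / 2 + s)) with ((2 * w) * / (p + y)) by (unfold p; field; lra).
  rewrite <- Rmult_minus_distr_l, newton_cauchy_kernel_error; auto;
    [| intros t ht; specialize (hl t ht); unfold p; lra | unfold p; lra].
  assert (Hprod : Rabs (node_ratio_prod l p y) <= q ^ length l).
  { apply node_ratio_prod_bound. intros t ht. specialize (hl t ht). specialize (hty t ht).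
    unfold Rdiv. rewrite Rabs_mult, Rabs_inv, (Rabs_right (p + t)) by (unfold p; lra).
    apply Rmult_le_reg_r with (p + t); [unfold p; lra|].
    rewrite Rmult_assoc, Rinv_l, Rmult_1_r by (unfold p; lra).
    apply Rle_trans with (q * t); [exact hty|]. apply Rmult_le_compat_l; unfold p; lra. }
  assert (Hkernel : 0 <= 2 * w * / (p + y) <= w / (/ 2 + s)).
  { split; [apply Rmult_le_pos; [lra | left; apply Rinv_0_lt_compat; unfold p; lra]|].
    replace (w / (/ 2 + s)) with (2 * w * / (1 + 2 * s)) by (field; lra).
    apply Rmult_le_compat_l; [lra|]. apply Rinv_le_contravar; unfold p; lra. }
  rewrite <- Rmult_assoc, Rabs_mult, (Rabs_right (2 * w * / (p + y))) by lra.
  rewrite Rmult_comm. apply Rmult_le_compat; [apply Rabs_pos | lra | exact Hprod | lra].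
Qed.

Lemma newton_cauchy_sum_error (L : list (R * R)) :
  (forall p, In p L -> 0 <= fst p /\ / 2 <= snd p) ->
  Rabs (cauchy_sum L ((x + y) / 2) - newton l (fun u => cauchy_sum L ((x + u) / 2)) y)
  <= q ^ length l * cauchy_sum L (/ 2).
Proof.
  induction L as [|[w s] L IH]; intros HL.
  - unfold cauchy_sum. simpl. rewrite newton_zero, Rminus_0_r, Rabs_R0, Rmult_0_r. lra.
  - destruct (HL (w, s) (or_introl eq_refl)) as [hw hs]. simpl in hw, hs.
    change (cauchy_sum ((w, s) :: L)) with (fun z => w / (z + s) + cauchy_sum L z). cbv beta.
    rewrite newton_add.
    replace (w / ((x + y) / 2 + s) + cauchy_sum L ((x + y) / 2) -
             (newton l (fun u => w / ((x + u) / 2 + s)) y +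
              newton l (fun u => cauchy_sum L ((x + u) / 2)) y))
      with ((w / ((x + y) / 2 + s) - newton l (fun u => w / ((x + u) / 2 + s)) y) +
            (cauchy_sum L ((x + y) / 2) - newton l (fun u => cauchy_sum L ((x + u) / 2)) y))
      by ring.
    eapply Rle_trans; [apply Rabs_triang|]. rewrite Rmult_plus_distr_l.
    apply Rplus_le_compat; [apply newton_cauchy_term_error; auto|].
    apply IH. intros p hp. apply HL. simpl; auto.
Qed.

Lemma gauss_ratio_newton_error (n : nat) : (2 <= n)%nat ->
  Rabs (gauss_ratio n ((x + y) / 2) - newton l (fun u => gauss_ratio n ((x + u) / 2)) y)
  <= q ^ length l * exp 1.
Proof.
  intros hn. destruct (rising_ratio_partial_fractions n) as [L [HL HR]].
  set (r := exp (- / 2 * ln (INR n))).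
  assert (Hg : forall u, 1 <= u -> gauss_ratio n ((x + u) / 2) = r * (1 + cauchy_sum L ((x + u) / 2))).
  { intros u hu. rewrite gauss_ratio_rising by (lra || lia). rewrite HR; [reflexivity|].
    intros k _. pose proof (pos_INR k). lra. }
  rewrite Hg, (newton_ext l _ (fun u => r * (1 + cauchy_sum L ((x + u) / 2)))) by (auto || lra).
  rewrite newton_scal, newton_add, newton_const by exact hne.
  replace (r * (1 + cauchy_sum L ((x + y) / 2)) -
           r * (1 + newton l (fun u => cauchy_sum L ((x + u) / 2)) y))
    with (r * (cauchy_sum L ((x + y) / 2) - newton l (fun u => cauchy_sum L ((x + u) / 2)) y))
    by ring.
  assert (hr : 0 < r) by apply exp_pos.
  assert (hqm : 0 <= q ^ length l) by (apply pow_le, hq).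
  assert (Hhalf : r * (1 + cauchy_sum L (/ 2)) <= exp 1).
  { rewrite <- HR; [apply rising_ratio_half_le, hn|]. intros k _. pose proof (pos_INR k). lra. }
  rewrite Rabs_mult, (Rabs_right r) by lra.
  apply Rle_trans with (r * (q ^ length l * cauchy_sum L (/ 2))).
  - apply Rmult_le_compat_l; [lra|]. apply newton_cauchy_sum_error.
    intros p hp. destruct (HL p hp) as [hw [k [_ ->]]]. pose proof (pos_INR k). lra.
  - nra.
Qed.

Lemma Lambda_newton_error :
  Rabs (Lambda ((x + y) / 2) - newton l (fun u => Lambda ((x + u) / 2)) y) <= q ^ length l * exp 1.
Proof.
  assert (Hcv : forall u, In u l ->
    Un_cv (fun n => gauss_ratio n ((x + u) / 2)) (Lambda ((x + u) / 2))).
  { intros u hu. apply Lambda_gauss_cv. specialize (hl u hu). lra. }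
  apply (Un_cv_Rabs_le _ _ _ 2 (CV_minus _ _ _ _
           (Lambda_gauss_cv ((x + y) / 2) ltac:(lra)) (newton_cv l y _ _ Hcv))).
  exact gauss_ratio_newton_error.
Qed.

End NodeHypotheses.

Fixpoint arith_nodes (a h : R) (m : nat) : list R :=
  match m with
  | O => nil
  | S k => (a + INR k * h) :: arith_nodes a h k
  end.

Lemma arith_nodes_length (a h : R) (m : nat) : length (arith_nodes a h m) = m.
Proof. induction m as [|m IH]; simpl; auto. Qed.

Lemma arith_nodes_in (a h : R) (m : nat) : 0 < h ->
  forall t, In t (arith_nodes a h m) -> a <= t < a + INR m * h.
Proof.
  intros hh. induction m as [|m IH]; cbn [arith_nodes In]; intros t ht; [destruct ht|].
  rewrite S_INR. pose proof (pos_INR m).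
  destruct ht as [<-|ht]; [split; nra|]. specialize (IH t ht). nra.
Qed.

Lemma arith_nodes_nodup (a h : R) (m : nat) : 0 < h -> NoDup (arith_nodes a h m).
Proof.
  intros hh. induction m as [|m IH]; simpl; constructor; auto.
  intro hin. apply arith_nodes_in in hin; auto. lra.
Qed.

Definition block_nodes (a q : R) (m : nat) : list R := arith_nodes a (q * a / INR m) m.

Lemma block_nodes_close (a q y : R) (m : nat) : 0 < a -> 0 < q -> (1 <= m)%nat ->
  a <= y <= a * (1 + q) -> forall t, In t (block_nodes a q m) -> a <= t /\ Rabs (t - y) <= q * t.
Proof.
  intros ha hq hm hy t ht.
  assert (hmR : 1 <= INR m) by (apply (le_INR 1), hm).
  apply arith_nodes_in in ht; [|apply Rdiv_lt_0_compat; [nra | lra]].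
  replace (INR m * (q * a / INR m)) with (q * a) in ht by (field; lra).
  split; [lra|]. apply Rabs_le. split; nra.
Qed.

Lemma newton_block_nodes (a q : R) (m : nat) (f : R -> R) (y : R) :
  newton (block_nodes a q m) f y =
  rsum m (fun k => newton_coef (block_nodes a q m) f k * newton_basis (block_nodes a q m) k y).
Proof. rewrite newton_sum. unfold block_nodes at 1. rewrite arith_nodes_length. reflexivity. Qed.

Lemma Lambda_block_nodes_error (a q x y : R) (m : nat) :
  1 <= a -> 0 < q -> (1 <= m)%nat -> 0 <= x -> a <= y <= a * (1 + q) ->
  Rabs (Lambda ((x + y) / 2) - newton (block_nodes a q m) (fun u => Lambda ((x + u) / 2)) y)
  <= q ^ m * exp 1.
Proof.
  intros ha hq hm hx hy.
  pose proof (block_nodes_close a q y m ltac:(lra) hq hm hy) as Hclose.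
  assert (Hlen : length (block_nodes a q m) = m) by apply arith_nodes_length.
  rewrite <- Hlen at 2. apply Lambda_newton_error; try lra.
  - apply arith_nodes_nodup. apply Rdiv_lt_0_compat; [nra | apply lt_0_INR; lia].
  - intros t ht. destruct (Hclose t ht). lra.
  - intros t ht. apply Hclose, ht.
  - intros Hnil. rewrite Hnil in Hlen. simpl in Hlen. lia.
Qed.

Lemma geometric_piece (A : R) (m : nat) : 1 < A -> (1 <= m)%nat ->
  forall y, 1 <= y <= A ^ m -> exists J, (J < m)%nat /\ A ^ J <= y <= A ^ S J.
Proof.
  intros hA. induction m as [|m IH]; intros hm y hy; [lia|].
  destruct (Nat.eq_dec m 0) as [->|hm0].
  - exists 0%nat. split; [lia|]. simpl in *. lra.
  - destruct (Rle_lt_dec y (A ^ m)) as [h|h].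
    + destruct (IH ltac:(lia) y ltac:(lra)) as [J [hJ HJ]]. exists J. split; [lia | exact HJ].
    + exists m. split; [lia | lra].
Qed.

Definition piece_index (A : R) (m : nat) (y : R) : nat :=
  epsilon (inhabits 0%nat) (fun J => (J < m)%nat /\ A ^ J <= y <= A ^ S J).

Lemma piece_index_spec (A : R) (m : nat) (y : R) : 1 < A -> (1 <= m)%nat -> 1 <= y <= A ^ m ->
  (piece_index A m y < m)%nat /\ A ^ piece_index A m y <= y <= A ^ piece_index A m y * A.
Proof.
  intros hA hm hy. rewrite Rmult_comm.
  apply (epsilon_spec (inhabits 0%nat) (fun J => (J < m)%nat /\ A ^ J <= y <= A ^ S J)).
  apply geometric_piece; assumption.
Qed.

Lemma Rceil_ge (x : R) : x <= IZR (Rceil x).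
Proof. unfold Rceil. rewrite opp_IZR. destruct (base_Int_part (- x)) as [h _]. lra. Qed.

Lemma ceil_log_pow_ge (a X : R) : 1 < a -> 1 < X ->
  (1 <= Z.to_nat (Rceil (ln X / ln a)))%nat /\ X <= a ^ Z.to_nat (Rceil (ln X / ln a)).
Proof.
  intros ha hX.
  assert (hla : 0 < ln a) by (rewrite <- ln_1; apply ln_increasing; lra).
  assert (hlX : 0 < ln X) by (rewrite <- ln_1; apply ln_increasing; lra).
  pose proof (Rceil_ge (ln X / ln a)) as Hc.
  assert (hz : (0 < Rceil (ln X / ln a))%Z).
  { apply lt_IZR. apply Rlt_le_trans with (ln X / ln a); [apply Rdiv_lt_0_compat|]; assumption. }
  set (k := Z.to_nat (Rceil (ln X / ln a))).
  assert (Hk : ln X / ln a <= INR k) by (unfold k; rewrite INR_IZR_INZ, Z2Nat.id by lia; exact Hc).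
  split; [unfold k; lia|].
  rewrite <- (exp_ln X), <- (exp_ln (a ^ k)) by (apply pow_lt || idtac; lra).
  apply exp_le_mono. rewrite ln_pow by lra.
  apply Rmult_le_reg_r with (/ ln a); [apply Rinv_0_lt_compat, hla|].
  rewrite Rmult_assoc, Rinv_r, Rmult_1_r by lra. exact Hk.
Qed.

Lemma pow_inv_mul_le (a e eps : R) (k : nat) : 0 < a -> 0 < eps ->
  e / eps <= a ^ k -> (/ a) ^ k * e <= eps.
Proof.
  intros ha heps H. pose proof (pow_lt a k ha).
  rewrite pow_inv. apply Rmult_le_reg_l with (a ^ k); [lra|].
  rewrite <- Rmult_assoc, Rinv_r, Rmult_1_l by lra.
  apply Rmult_le_reg_r with (/ eps); [apply Rinv_0_lt_compat, heps|].
  rewrite Rmult_assoc, Rinv_r, Rmult_1_r by lra. exact H.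
Qed.

Theorem theorem3p5 (N : nat) (eps beta : R)
  (hN : (1 < N)%nat) (heps0 : 0 < eps) (hepsE : eps < exp 1)
  (hb1 : / 2 < beta) (hb2 : beta < 1) :
  let K : nat :=
    (Z.to_nat (Rceil (ln (INR N) / ln (/ beta))) *
     Z.to_nat (Rceil (ln (exp 1 / eps) / ln (beta / (1 - beta)))))%nat in
  exists (c r : nat -> R -> R),
    forall x y : R, 0 <= x <= INR N -> 1 <= y <= INR N ->
      Rabs (Lambda ((x + y) / 2) - sum1K K (fun i => c i x * r i y)) <= eps.
Proof.
  intros K. subst K.
  set (A := / beta). set (q := / (beta / (1 - beta))).
  assert (hA : 1 < A) by (unfold A; rewrite <- Rinv_1; apply Rinv_lt_contravar; lra).
  assert (hq : 0 < q) by (apply Rinv_0_lt_compat, Rdiv_lt_0_compat; lra).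
  assert (hAq : A = 1 + q) by (unfold A, q; field; lra).
  destruct (ceil_log_pow_ge A (INR N) hA) as [hK1 HN]; [apply (lt_INR 1), hN|].
  destruct (ceil_log_pow_ge (beta / (1 - beta)) (exp 1 / eps)) as [hK2 Heps].
  { apply Rmult_lt_reg_r with (1 - beta); [lra|]. unfold Rdiv. rewrite Rmult_assoc, Rinv_l; lra. }
  { apply Rmult_lt_reg_r with eps; [lra|]. unfold Rdiv. rewrite Rmult_assoc, Rinv_l; lra. }
  set (K1 := Z.to_nat (Rceil (ln (INR N) / ln A))) in *.
  set (K2 := Z.to_nat (Rceil (ln (exp 1 / eps) / ln (beta / (1 - beta))))) in *.
  set (nodes := fun J : nat => block_nodes (A ^ J) q K2).
  set (coefs := fun x J k => newton_coef (nodes J) (fun u => Lambda ((x + u) / 2)) k).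
  set (basis := fun y J k => newton_basis (nodes J) k y).
  exists (fun i x => coefs x ((i - 1) / K2)%nat ((i - 1) mod K2)%nat).
  exists (fun i y => if Nat.eqb (piece_index A K1 y) ((i - 1) / K2)
                     then basis y ((i - 1) / K2)%nat ((i - 1) mod K2)%nat else 0).
  intros x y hx hy. cbv beta.
  destruct (piece_index_spec A K1 y hA hK1 ltac:(lra)) as [hJ hJy].
  rewrite sum1K_block_select by exact hJ.
  unfold coefs, basis, nodes. rewrite <- newton_block_nodes.
  apply Rle_trans with (q ^ K2 * exp 1).
  2:{ apply pow_inv_mul_le; [apply Rdiv_lt_0_compat; lra | exact heps0 | exact Heps]. }
  apply Lambda_block_nodes_error; [apply pow_R1_Rle; lra | lra | exact hK2 | lra |].
  rewrite <- hAq. exact hJy.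
Qed.
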